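(* Let $d\ge0$ be an integer, let $\mathcal D_d$ be the class of all $d$-degenerate graphs, and let $H$ be a graph. If $H$ is not $d$-degenerate then $\mathrm{ex}(H,\mathcal D_d,n)=0$ for all $n$. If $H$ is $d$-degenerate, then there exist positive real numbers $c_1,c_2$ such that $\mathrm{ex}(H,\mathcal D_d,n)\le c_2n^{\alpha_d(H)}$ for every positive integer $n$ and $\mathrm{ex}(H,\mathcal D_d,n)\ge c_1n^{\alpha_d(H)}$ for all sufficiently large $n$.
   Context: Graphs are finite and simple. A graph is $d$-degenerate if every subgraph has minimum degree at most $d$. $\alpha_d(H)$ is the maximum size of a set of pairwise non-adjacent vertices of $H$ each of degree at most $d$ in $H$. For a class $\mathcal G$ of graphs, $\mathrm{ex}(H,\mathcal G,n)$ is the maximum number of subgraphs isomorphic to $H$ contained in an $n$-vertex graph of $\mathcal G$. *)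

From mathcomp Require Import all_boot all_order all_algebra.
From mathcomp Require Import boolp reals.
Set Implicit Arguments. Unset Strict Implicit. Unset Printing Implicit Defensive.

(* A (finite, simple) graph on a finite vertex type T is given by a symmetric,
   irreflexive edge relation e : rel T. *)

(* d-degenerate: every (nonempty) subgraph (S, F) -- S a vertex set, F a
   symmetric set of ordered pairs of G-edges with both ends in S -- has a vertex
   of degree at most d. *)
Definition degenerate (d : nat) (T : finType) (e : rel T) : bool :=
  [forall S : {set T}, forall F : {set T * T},
     ((S != set0)
      && (F \subset [set p | [&& e p.1 p.2, p.1 \in S & p.2 \in S]])
      && [forall x, forall y, ((x, y) \in F) ==> ((y, x) \in F)])
     ==> [exists v in S, #|[set u | (v, u) \in F]| <= d]].

Definition gdeg (T : finType) (e : rel T) (v : T) : nat := #|[set u | e v u]|.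

Definition alpha (d : nat) (V : finType) (eH : rel V) : nat :=
  \max_(A : {set V} | [forall x in A, forall y in A, ~~ eH x y]
                      && [forall x in A, gdeg eH x <= d]) #|A|.

Definition iso_subgraph (V T : finType) (eH : rel V) (e : rel T)
  (S : {set T}) (F : {set T * T}) : Prop :=
  (F \subset [set p | [&& e p.1 p.2, p.1 \in S & p.2 \in S]]) /\
  exists f : V -> T, [/\ injective f, S = f @: [set: V] &
                         forall u v, eH u v = ((f u, f v) \in F)].

Definition count_copies (V T : finType) (eH : rel V) (e : rel T) : nat :=
  #|[set p : {set T} * {set T * T} | `[< iso_subgraph eH e p.1 p.2 >] ]|.

Definition rel_of_set (n : nat) (E : {set 'I_n * 'I_n}) : rel 'I_n :=
  fun x y => (x, y) \in E.

Definition is_graph (T : finType) (e : rel T) : bool :=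
  [forall x, forall y, e x y == e y x] && [forall x, ~~ e x x].

Definition ex_deg (d : nat) (V : finType) (eH : rel V) (n : nat) : nat :=
  \max_(E : {set 'I_n * 'I_n} | is_graph (rel_of_set E)
                                && degenerate d (rel_of_set E))
     count_copies eH (rel_of_set E).

From mathcomp Require Import all_boot all_order all_algebra.
From mathcomp Require Import boolp reals.
From mathcomp Require Import zify.
Set Implicit Arguments. Unset Strict Implicit. Unset Printing Implicit Defensive.

(* Degeneracy is handled through degeneracy orders: a graph is d-degenerate iff
   its vertices can be ranked injectively so that every vertex has at most d
   later neighbours (its forward neighbourhood).
   - If H is not d-degenerate, no d-degenerate graph contains it, because a
     degeneracy order of the host pulls back along an embedding.
   - Upper bound.  Copies of H are at most embeddings of H.  Fixing a
     degeneracy order of the host, an embedding f is encoded by recording for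
     each vertex h of H either f h itself, when h is a root (no neighbour is
     mapped earlier), or an earlier neighbour h' with the position of f h in
     the forward neighbourhood of f h' (at most d choices).  The code is
     injective and the roots are independent vertices of degree <= d, hence at
     most alpha_d(H) of them: ex <= 2^|H| (|H|(d+1)+1)^|H| n^alpha_d(H).
   - Lower bound.  Blowing up every vertex of a maximum independent set A of
     vertices of degree <= d into m+1 copies keeps the graph d-degenerate and
     creates (m+1)^|A| copies of H; relabel it into n >= |H|(m+1) vertices and
     take m+1 = n %/ (|H|+1). *)

Section DegeneracyOrders.

Variables (d : nat) (T : finType) (e : rel T).

Definition induced_edges (S : {set T}) : {set T * T} :=
  [set p | [&& e p.1 p.2, p.1 \in S & p.2 \in S]].

Definition forward (r : T -> nat) (v : T) : {set T} :=
  [set u | e v u && (r v < r u)].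

Definition degeneracy_order (r : T -> nat) : Prop :=
  injective r /\ forall v, #|forward r v| <= d.

(* The defining property applied to the subgraph induced by S. *)
Lemma degenerate_low_vertex (S : {set T}) :
  symmetric e -> degenerate d e -> S != set0 ->
  exists2 v, v \in S & #|[set u in S | e v u]| <= d.
Proof.
move=> esym /forallP/(_ S)/forallP/(_ (induced_edges S)) + SN.
have Fsym : [forall x, forall y,
    ((x, y) \in induced_edges S) ==> ((y, x) \in induced_edges S)].
  apply/forallP => x; apply/forallP => y; apply/implyP.
  by rewrite !inE /= esym => /and3P[-> -> ->].
rewrite SN subxx Fsym /= => /existsP[v /andP[vS low]]; exists v => //.
apply: leq_trans low; apply: subset_leq_card; apply/subsetP => u.
by rewrite !inE vS => /andP[-> ->].
Qed.

(* Repeatedly removing a low-degree vertex (ranked first) orders any set S. *)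
Lemma degenerate_order_on (S : {set T}) :
  symmetric e -> degenerate d e ->
  exists r : T -> nat, {in S &, injective r} /\
    {in S, forall v, #|[set u in S | e v u && (r v < r u)]| <= d}.
Proof.
move=> esym dege; elim: {S}_.+1 {-2}S (ltnSn #|S|) => // k IH S Sk.
have [-> | SN] := eqVneq S set0.
  by exists (fun=> 0); split => [x y | v]; rewrite inE.
have [v vS low] := degenerate_low_vertex esym dege SN.
have [|r [rinj rfwd]] := IH (S :\ v).
  by move: Sk; rewrite (cardsD1 v S) vS.
exists (fun x => if x == v then 0 else (r x).+1); split.
  move=> x y xS yS /=.
  case: (eqVneq x v) => [->|xv]; case: (eqVneq y v) => [->|yv] //.
  by move=> [] /rinj; apply; rewrite !inE ?xv ?yv.
move=> w wS /=; case: (eqVneq w v) => [->|wv].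
  apply: leq_trans low; apply: subset_leq_card; apply/subsetP => u.
  by rewrite !inE => /and3P[-> -> _].
apply: leq_trans (rfwd w _); last by rewrite !inE wv.
apply: subset_leq_card; apply/subsetP => u; rewrite !inE.
by case: (eqVneq u v) => [->|uv] /=; rewrite ?ltn0 ?andbF ?ltnS.
Qed.

Lemma degenerate_order :
  symmetric e -> degenerate d e -> exists r, degeneracy_order r.
Proof.
move=> esym dege; have [r [rinj rfwd]] := degenerate_order_on setT esym dege.
exists r; split => [x y | v]; first by apply: rinj; rewrite inE.
by apply: leq_trans (rfwd v (in_setT v)); apply: subset_leq_card; apply/subsetP => u; rewrite !inE.
Qed.

(* Conversely, the r-least vertex of a subgraph has degree <= d in it. *)
Lemma order_degenerate (r : T -> nat) :
  irreflexive e -> degeneracy_order r -> degenerate d e.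
Proof.
move=> eirr [rinj rfwd].
apply/forallP => S; apply/forallP => F; apply/implyP => /andP[/andP[SN Fsub] _].
have [x0 x0S] := set0Pn _ SN.
case: (arg_minnP r x0S) => v vS vmin.
apply/existsP; exists v; apply/andP; split=> //.
apply: leq_trans (rfwd v); apply: subset_leq_card; apply/subsetP => u.
rewrite !inE => /(subsetP Fsub); rewrite inE /= => /and3P[evu _ uS].
rewrite evu ltn_neqAle vmin // andbT; apply/eqP => /rinj uv.
by rewrite uv eirr in evu.
Qed.

End DegeneracyOrders.

Section Embeddings.

Variables (V T : finType) (eH : rel V) (e : rel T).

Definition embeddings : {set {ffun V -> T}} :=
  [set f : {ffun V -> T} | injectiveb f &&
                           [forall u, forall v, eH u v ==> e (f u) (f v)]].

Lemma embeddingsP (f : {ffun V -> T}) :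
  reflect (injective f /\ forall u v, eH u v -> e (f u) (f v))
          (f \in embeddings).
Proof.
rewrite inE; apply: (iffP andP) => [[/injectiveP fi /forallP fe] | [fi fe]].
  by split=> // u v; move: (fe u) => /forallP/(_ v)/implyP.
split; first exact/injectiveP.
by apply/forallP => u; apply/forallP => v; apply/implyP/fe.
Qed.

(* Every copy of H is the image of some embedding. *)
Lemma copies_le_embeddings : count_copies eH e <= #|embeddings|.
Proof.
pose copy_of (f : {ffun V -> T}) := (f @: setT,
  [set p | [exists u, exists v, eH u v && (p == (f u, f v))]]).
apply: leq_trans (leq_imset_card copy_of embeddings).
apply: subset_leq_card; apply/subsetP => -[S F].
rewrite inE => /asboolP[/= Fsub [f [fi SE fF]]].
apply/imsetP; exists (finfun f).
  apply/embeddingsP; split=> [x y | u v]; rewrite !ffunE; first exact: fi.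
  by rewrite fF => /(subsetP Fsub); rewrite inE => /and3P[].
congr pair; first by rewrite SE; apply: eq_imset => x; rewrite ffunE.
apply/setP => -[x y]; rewrite inE; apply/idP/existsP => [xyF | [u]].
  move: (subsetP Fsub _ xyF); rewrite inE /= SE => /and3P[_].
  move=> /imsetP[u _ Ex] /imsetP[v _ Ey]; subst x y.
  by exists u; apply/existsP; exists v; rewrite !ffunE fF xyF eqxx.
by move=> /existsP[v /andP[huv /eqP ->]]; rewrite !ffunE -fF.
Qed.

Lemma forward_pullback (f : V -> T) (r : T -> nat) (v : V) :
  injective f -> (forall u w, eH u w -> e (f u) (f w)) ->
  #|forward eH (r \o f) v| <= #|forward e r (f v)|.
Proof.
move=> fi fe; rewrite -(card_imset _ fi); apply: subset_leq_card.
apply/subsetP => _ /imsetP[u + ->]; rewrite !inE /= => /andP[evu ->].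
by rewrite fe.
Qed.

Lemma embedding_degenerate d (f : V -> T) :
  symmetric e -> irreflexive eH -> injective f ->
  (forall u v, eH u v -> e (f u) (f v)) -> degenerate d e -> degenerate d eH.
Proof.
move=> esym Hirr fi fe /(degenerate_order esym)[r [rinj rfwd]].
apply: (order_degenerate (r := r \o f)) => //; split; first exact: inj_comp.
by move=> v; apply: leq_trans (rfwd (f v)); apply: forward_pullback.
Qed.

End Embeddings.

Lemma leq_expn2r (e m n : nat) : m <= n -> m ^ e <= n ^ e.
Proof. by case: e => [|e] // mn; rewrite leq_exp2r. Qed.

Definition isl (X Y : Type) (z : X + Y) : bool := if z is inl _ then true else false.

Lemma card_isl (X Y : finType) : #|[pred z : X + Y | isl z]| = #|X|.
Proof.
have inl_inj : injective (@inl X Y) by move=> x y [].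
rewrite -(card_codom inl_inj); apply: eq_card => -[x | y] /=.
  by rewrite codom_f.
by apply/esym/codomP => -[].
Qed.

Lemma card_isr (X Y : finType) : #|[pred z : X + Y | ~~ isl z]| = #|Y|.
Proof.
have inr_inj : injective (@inr X Y) by move=> x y [].
rewrite -(card_codom inr_inj); apply: eq_card => -[x | y] /=.
  by apply/esym/codomP => -[].
by rewrite codom_f.
Qed.

Lemma card_set_of (I : finType) : #|{set I}| = 2 ^ #|I|.
Proof.
rewrite -(cardsT I) -card_powerset -cardsT; apply: eq_card => A.
by rewrite powersetE subsetT inE.
Qed.

(* Functions I -> X + Y taking at most a values on the left are few:
   choose the set of left positions, then the values there and elsewhere. *)
Lemma card_few_lefts (I X Y : finType) (a : nat) : 0 < #|X| ->
  #|[set c : {ffun I -> X + Y} | #|[set i | isl (c i)]| <= a]|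
    <= 2 ^ #|I| * (#|X| ^ a * #|Y|.+1 ^ #|I|).
Proof.
move=> X0; rewrite -sum1_card -card_set_of -sum_nat_const.
rewrite (partition_big (fun c : {ffun I -> X + Y} => [set i | isl (c i)]) xpredT) //=.
apply: leq_sum => A _; rewrite sum1_card.
have [Aa | aA] := leqP #|A| a; last first.
  rewrite eq_card0 // => c; rewrite !inE; apply/negP => /andP[].
  by rewrite inE => + /eqP cA; rewrite cA leqNgt aA.
pose F i := if i \in A then [pred z : X + Y | isl z] else [pred z | ~~ isl z].
apply: (@leq_trans #|family F|).
  apply: subset_leq_card; apply/subsetP => c; rewrite !inE => /andP[_ /eqP cA].
  by apply/familyP => i; rewrite /F -cA inE; case: (c i).
rewrite card_family foldrE big_image (bigID (mem A)) /=.
rewrite (eq_bigr (fun=> #|X|)) => [|i iA]; last by rewrite /F iA card_isl.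
rewrite [X in _ * X](eq_bigr (fun=> #|Y|)) => [|i iA]; last first.
  by rewrite /F (negbTE iA) card_isr.
rewrite !prod_nat_const leq_mul ?leq_pexp2l //.
apply: leq_trans (leq_expn2r _ (leqnSn _)) _.
exact: leq_pexp2l (max_card _).
Qed.

Section Encoding.

Variables (d : nat) (V T : finType) (eH : rel V) (e : rel T) (r : T -> nat).

Definition parent (f : {ffun V -> T}) (h : V) : option V :=
  [pick h' | eH h h' && (r (f h') < r (f h))].

Definition code (f : {ffun V -> T}) : {ffun V -> T + V * 'I_d.+1} :=
  [ffun h => if parent f h is Some h'
             then inr (h', inord (index (f h) (enum (forward e r (f h')))))
             else inl (f h)].

(* Embeddings agree vertex by vertex, by induction on the rank of the image. *)
Lemma code_inj : symmetric e -> (forall v, #|forward e r v| <= d) ->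
  {in embeddings eH e &, injective code}.
Proof.
move=> esym rfwd f1 f2 /embeddingsP[_ fe1] /embeddingsP[_ fe2] c12.
suff agree k h : r (f1 h) < k -> f1 h = f2 h.
  by apply/ffunP => h; apply: (agree _ h (ltnSn _)).
elim: k h => // k IH h hk; move: c12 => /ffunP/(_ h); rewrite !ffunE /parent.
case: pickP => [h' /andP[hh' lt1] | _]; case: pickP => [h'' /andP[hh'' lt2] | _] //.
  case=> Eh; subst h'' => /(congr1 val) /=.
  have e12 : f1 h' = f2 h' by apply: IH; apply: leq_trans lt1 _; rewrite -ltnS.
  set L := enum (forward e r (f1 h')).
  have in1 : f1 h \in L by rewrite mem_enum inE esym fe1.
  have in2 : f2 h \in L by rewrite mem_enum inE e12 lt2 esym fe2.
  have ltL (x : T) : x \in L -> index x L < d.+1.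
    rewrite -index_mem => /leq_trans; apply; apply: leq_trans (leqnSn _).
    by rewrite /L -cardE.
  rewrite -e12 -/L !inordK ?ltL // => ind12.
  by rewrite -(nth_index (f1 h) in1) ind12 nth_index.
by case.
Qed.

Lemma root_earliest (f : {ffun V -> T}) (h y : V) :
  irreflexive eH -> injective r -> injective f ->
  isl (code f h) -> eH h y -> r (f h) < r (f y).
Proof.
move=> Hirr rinj fi; rewrite ffunE /parent.
case: pickP => [//| noparent] _ hy; move: (noparent y); rewrite hy /=.
rewrite ltnNge => /negbFE; rewrite leq_eqVlt => /orP[/eqP/rinj/fi yh | //].
by rewrite yh Hirr in hy.
Qed.

Lemma roots_le_alpha (f : {ffun V -> T}) :
  symmetric eH -> irreflexive eH -> injective r ->
  (forall v, #|forward e r v| <= d) -> f \in embeddings eH e ->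
  #|[set h | isl (code f h)]| <= alpha d eH.
Proof.
move=> Hsym Hirr rinj rfwd /embeddingsP[fi fe].
have early := root_earliest Hirr rinj fi.
apply: leq_bigmax_cond; apply/andP; split.
  apply/forallP => x; apply/implyP; rewrite inE => xr.
  apply/forallP => y; apply/implyP; rewrite inE => yr; apply/negP => hxy.
  have hyx : eH y x by rewrite Hsym.
  by have := ltn_trans (early x y xr hxy) (early y x yr hyx); rewrite ltnn.
apply/forallP => x; apply/implyP; rewrite inE => xr.
apply: leq_trans (rfwd (f x)); rewrite /gdeg -(card_imset _ fi).
apply: subset_leq_card; apply/subsetP => _ /imsetP[u + ->]; rewrite !inE => hxu.
by rewrite fe // early.
Qed.

End Encoding.

Lemma card_embeddings d (V T : finType) (eH : rel V) (e : rel T) :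
  symmetric eH -> irreflexive eH -> symmetric e -> degenerate d e -> 0 < #|T| ->
  #|embeddings eH e| <=
    2 ^ #|V| * (#|T| ^ alpha d eH * (#|V| * d.+1).+1 ^ #|V|).
Proof.
move=> Hsym Hirr esym dege T0.
have [r [rinj rfwd]] := degenerate_order esym dege.
rewrite -(card_in_imset (code_inj (eH := eH) esym rfwd)).
have := @card_few_lefts V T (V * 'I_d.+1)%type (alpha d eH) T0.
rewrite card_prod card_ord; apply: leq_trans; apply: subset_leq_card.
apply/subsetP => _ /imsetP[f fE ->].
by rewrite inE roots_le_alpha.
Qed.

Section Relabelling.

Variables (W : finType) (n : nat) (eW : rel W) (g : W -> 'I_n).
Hypothesis ginj : injective g.

Definition relabel : {set 'I_n * 'I_n} :=
  [set p | [exists x, exists y, eW x y && (p == (g x, g y))]].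

Lemma relabelE (x y : W) : rel_of_set relabel (g x) (g y) = eW x y.
Proof.
rewrite /rel_of_set inE; apply/existsP/idP => [[x' /existsP[y']] | exy].
  by case/andP=> exy' /eqP[/ginj -> /ginj ->].
by exists x; apply/existsP; exists y; rewrite exy eqxx.
Qed.

Lemma relabelP (a b : 'I_n) : rel_of_set relabel a b ->
  exists x y, [/\ a = g x, b = g y & eW x y].
Proof.
rewrite /rel_of_set inE => /existsP[x /existsP[y /andP[exy /eqP[-> ->]]]].
by exists x, y.
Qed.

(* Vertices of the image are ranked by (twice) their original rank; the
   isolated vertices outside the image get odd ranks. *)
Definition relabel_rank (r : W -> nat) (z : 'I_n) : nat :=
  if [pick w | g w == z] is Some w then (r w).*2 else z.*2.+1.

Lemma relabel_order d (r : W -> nat) : degeneracy_order d eW r ->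
  degeneracy_order d (rel_of_set relabel) (relabel_rank r).
Proof.
move=> [rinj rfwd]; split.
  move=> z1 z2; rewrite /relabel_rank; case: pickP => [w1 /eqP <-|_]; case: pickP => [w2 /eqP <-|_].
  - by move/double_inj/rinj => ->.
  - by move/(congr1 odd); rewrite /= !odd_double.
  - by move/(congr1 odd); rewrite /= !odd_double.
  - by case=> /double_inj/val_inj.
move=> z; rewrite /forward {1}/relabel_rank.
case: pickP => [w /eqP <- | notimg]; last first.
  rewrite eq_card0 // => u; rewrite !inE; apply/negP => /andP[+ _].
  by case/relabelP => x [y [zx _ _]]; have := notimg x; rewrite zx eqxx.
apply: leq_trans (rfwd w); rewrite -(card_imset _ ginj); apply: subset_leq_card.
apply/subsetP => u; rewrite inE => /andP[ewu].
case/relabelP: (ewu) => x [y [/ginj xw uy _]]; subst x u.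
rewrite /relabel_rank; case: pickP => [y' /eqP/ginj -> | noy]; last first.
  by have := noy y; rewrite eqxx.
by rewrite ltn_double relabelE in ewu * => lt; rewrite imset_f // inE ewu.
Qed.

Lemma relabel_graph d : symmetric eW -> irreflexive eW -> degenerate d eW ->
  is_graph (rel_of_set relabel) && degenerate d (rel_of_set relabel).
Proof.
move=> esym eirr /(degenerate_order esym)[r rord].
have irr : irreflexive (rel_of_set relabel).
  by move=> a; apply/negP => /relabelP[x [y [-> /ginj <-]]]; rewrite eirr.
rewrite (order_degenerate irr (relabel_order rord)) andbT.
apply/andP; split; last by apply/forallP => a; rewrite irr.
apply/forallP => a; apply/forallP => b; apply/eqP.
by apply/idP/idP => /relabelP[x [y [-> -> exy]]]; rewrite relabelE // esym.
Qed.

End Relabelling.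

Section BlowUp.

Variables (V : finType) (eH : rel V) (A : {set V}) (m : nat).

(* In V x 'I_m.+1 only the copies (x, 0) and the copies of vertices of A are
   used; the blow-up joins two used copies of adjacent vertices. *)
Definition active (w : V * 'I_m.+1) : bool := (w.1 \in A) || (w.2 == ord0).

Definition blowup : rel (V * 'I_m.+1) :=
  fun x y => [&& eH x.1 y.1, active x & active y].

Lemma blowup_sym : symmetric eH -> symmetric blowup.
Proof. by move=> Hsym x y; rewrite /blowup Hsym [active x && _]andbC. Qed.

Lemma blowup_irr : irreflexive eH -> irreflexive blowup.
Proof. by move=> Hirr x; rewrite /blowup Hirr. Qed.

(* Copies of vertices of A (and unused copies) come first, in any order; the
   used copies of the other vertices follow, ordered like H. *)
Definition blowup_rank (rH : V -> nat) (w : V * 'I_m.+1) : nat :=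
  if active w && (w.1 \notin A) then #|{: V * 'I_m.+1}| + rH w.1
  else enum_rank w.

(* The copies of a vertex of A only see the copies (y, 0) of its <= d
   neighbours, none of which lies in A. *)
Lemma blowup_order d (rH : V -> nat) :
  (forall x y, x \in A -> y \in A -> ~~ eH x y) ->
  (forall x, x \in A -> gdeg eH x <= d) ->
  degeneracy_order d eH rH -> degeneracy_order d blowup (blowup_rank rH).
Proof.
move=> indA degA [rinj rfwd].
have copy0 w : active w && (w.1 \notin A) -> w = (w.1, ord0).
  by case: w => [x i] /andP[]; rewrite /active /= => /orP[-> | /eqP ->].
have copy0_inj : injective (fun y : V => (y, ord0 : 'I_m.+1)) by move=> a b [].
split.
  move=> x y; rewrite /blowup_rank.
  case: ifP => cx; case: ifP => cy.
  - by move/addnI/rinj => xy; rewrite (copy0 x cx) (copy0 y cy) xy.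
  - by move=> E; have := ltn_ord (enum_rank y); rewrite -E ltnNge leq_addr.
  - by move=> E; have := ltn_ord (enum_rank x); rewrite E ltnNge leq_addr.
  - by move/val_inj/enum_rank_inj.
move=> [x i]; case xA: (x \in A).
  apply: leq_trans (degA x xA); rewrite /gdeg -(card_imset _ copy0_inj).
  apply: subset_leq_card; apply/subsetP => -[y j]; rewrite !inE /blowup /active /=.
  case yA: (y \in A); first by rewrite (negbTE (indA x y xA yA)).
  by move=> /andP[/and3P[hxy _ /eqP ->] _]; rewrite imset_f ?inE.
case: (boolP (i == ord0)) => [/eqP -> | i0]; last first.
  rewrite (_ : forward _ _ _ = set0) ?cards0 //; apply/setP => w.
  by rewrite !inE /blowup /active /= xA (negbTE i0) !andbF.
apply: leq_trans (rfwd x); rewrite -(card_imset _ copy0_inj); apply: subset_leq_card.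
apply/subsetP => -[y j]; rewrite !inE /blowup_rank /blowup /active /= xA eqxx /=.
case: ifP => [/andP[/orP[yA | /eqP ->] nyA] | _].
- by rewrite yA in nyA.
- by rewrite ltn_add2l => /andP[/andP[hxy _] lt]; rewrite imset_f // inE hxy.
- by move=> /andP[_]; rewrite ltnNge (ltnW (leq_trans (ltn_ord _) (leq_addr _ _))).
Qed.

End BlowUp.

Arguments blowup {V} eH A m.

Lemma induced_copy (V T : finType) (eH : rel V) (e : rel T) (f : V -> T) :
  injective f -> (forall u v, e (f u) (f v) = eH u v) ->
  iso_subgraph eH e (f @: setT) (induced_edges e (f @: setT)).
Proof.
move=> fi fe; split; first exact: subxx.
by exists f; split=> // u v; rewrite inE /= fe !imset_f ?inE ?andbT.
Qed.

(* Choosing a copy of each vertex of A gives (m+1)^|A| copies of H with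
   pairwise distinct vertex sets in the relabelled blow-up. *)
Lemma blowup_copies (V : finType) (eH : rel V) (A : {set V}) m n
    (g : V * 'I_m.+1 -> 'I_n) :
  injective g ->
  m.+1 ^ #|A| <= count_copies eH (rel_of_set (relabel (blowup eH A m) g)).
Proof.
move=> ginj; set e := rel_of_set _.
pose emb (phi : {ffun V -> 'I_m.+1}) (h : V) := g (h, phi h).
pose copy phi := (emb phi @: setT, induced_edges e (emb phi @: setT)).
have copy_inj : injective copy.
  move=> phi1 phi2 [S12 _]; apply/ffunP => h.
  have : emb phi1 h \in emb phi2 @: setT by rewrite -S12 imset_f.
  by case/imsetP => h' _ /ginj[<-].
have := card_pffun_on ord0 A (predT : pred 'I_m.+1); rewrite card_ord => <-.
rewrite -(card_imset _ copy_inj); apply: subset_leq_card.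
apply/subsetP => _ /imsetP[phi /pffun_onP[/supportP phiA _] ->].
have used h : active A (h, phi h).
  by rewrite /active /=; case: (boolP (h \in A)) => // /phiA ->.
rewrite inE; apply/asboolP; apply: induced_copy => [a b /ginj[] // | u v].
by rewrite /e relabelE // /blowup !used !andbT.
Qed.

Lemma is_graphP (T : finType) (e : rel T) :
  is_graph e -> symmetric e /\ irreflexive e.
Proof.
case/andP => /forallP esym /forallP eirr; split => [x y | x].
  by move: (esym x) => /forallP/(_ y)/eqP.
exact/negbTE.
Qed.

Lemma alpha_witness d (V : finType) (eH : rel V) :
  exists A : {set V}, [/\ forall x y, x \in A -> y \in A -> ~~ eH x y,
                          forall x, x \in A -> gdeg eH x <= d
                        & #|A| = alpha d eH].
Proof.
pose P (B : {set V}) := [forall x in B, forall y in B, ~~ eH x y]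
                        && [forall x in B, gdeg eH x <= d].
have P0 : P set0 by apply/andP; split; apply/forallP => x; rewrite inE.
case: (arg_maxnP (fun B : {set V} => #|B|) P0) => A PA Amax; exists A.
move: (PA) => /andP[/forallP indA /forallP degA]; split.
- by move=> x y xA yA; move: (indA x); rewrite xA => /forallP/(_ y); rewrite yA.
- by move=> x xA; move: (degA x); rewrite xA.
- by apply/eqP; rewrite eqn_leq (leq_bigmax_cond _ PA) /=; apply/bigmax_leqP.
Qed.

(* A graph containing H is not d-degenerate when H is not. *)
Lemma ex_deg_zero d (V : finType) (eH : rel V) (n : nat) :
  irreflexive eH -> ~~ degenerate d eH -> ex_deg d eH n = 0.
Proof.
move=> Hirr nH; apply/eqP; rewrite -leqn0; apply/bigmax_leqP.
move=> E /andP[/is_graphP[esym _] dE]; apply: leq_trans (copies_le_embeddings _ _) _.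
rewrite leqn0 cards_eq0; apply/eqP/setP => f; rewrite [in RHS]inE.
apply/negbTE/embeddingsP => -[fi fe].
by rewrite (embedding_degenerate esym Hirr fi fe dE) in nH.
Qed.

Lemma ex_deg_upper d (V : finType) (eH : rel V) (n : nat) :
  symmetric eH -> irreflexive eH -> 0 < n ->
  ex_deg d eH n <= 2 ^ #|V| * (#|V| * d.+1).+1 ^ #|V| * n ^ alpha d eH.
Proof.
move=> Hsym Hirr n0; apply/bigmax_leqP => E /andP[/is_graphP[esym _] dE].
apply: leq_trans (copies_le_embeddings _ _) _.
apply: leq_trans (card_embeddings Hsym Hirr esym dE _) _; rewrite card_ord //.
by rewrite [n ^ _ * _]mulnC mulnA.
Qed.

(* Blowing up a maximum independent low-degree set m+1 times inside n >=
   |V|(m+1) vertices yields (m+1)^alpha copies. *)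
Lemma ex_deg_lower d (V : finType) (eH : rel V) (m n : nat) :
  symmetric eH -> irreflexive eH -> degenerate d eH -> #|V| * m.+1 <= n ->
  m.+1 ^ alpha d eH <= ex_deg d eH n.
Proof.
move=> Hsym Hirr dH Vn.
have [A [indA degA <-]] := alpha_witness d eH.
have Wn : #|{: V * 'I_m.+1}| <= n by rewrite card_prod card_ord.
pose g (w : V * 'I_m.+1) : 'I_n := widen_ord Wn (enum_rank w).
have ginj : injective g by move=> x y /(congr1 val) /= /val_inj/enum_rank_inj.
have [rH rHord] := degenerate_order Hsym dH.
have dW : degenerate d (blowup eH A m).
  exact: order_degenerate (blowup_irr A Hirr) (blowup_order m indA degA rHord).
apply: leq_trans (blowup_copies eH A ginj) _; apply: leq_bigmax_cond.
by apply: (relabel_graph ginj) => //; [exact: blowup_sym | exact: blowup_irr].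
Qed.

(* Taking m + 1 = n %/ (|V| + 1) copies gives the polynomial lower bound. *)
Lemma ex_deg_lower_pow d (V : finType) (eH : rel V) (n : nat) :
  symmetric eH -> irreflexive eH -> degenerate d eH -> #|V|.+1 <= n ->
  n ^ alpha d eH <= (2 * #|V|.+1) ^ alpha d eH * ex_deg d eH n.
Proof.
move=> Hsym Hirr dH Vn; set k := #|V|; set q := n %/ k.+1.
have q0 : 0 < q by rewrite divn_gt0.
have n_le : n <= 2 * k.+1 * q.
  have := divn_eq n k.+1; have := ltn_pmod n (ltn0Sn k); rewrite -/q; nia.
apply: leq_trans (leq_expn2r _ n_le) _; rewrite expnMn leq_mul2l.
apply/orP; right; rewrite -(prednK q0); apply: ex_deg_lower => //.
by rewrite prednK //; have := leq_trunc_div n k.+1; rewrite -/q; nia.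
Qed.

Import Order.TTheory GRing.Theory Num.Theory.
Local Open Scope ring_scope.

Theorem mainTheorem6 (d : nat) (V : finType) (eH : rel V)
    (Hsym : symmetric eH) (Hirr : irreflexive eH) (R : realType) :
  (~~ degenerate d eH -> forall n : nat, ex_deg d eH n = 0%N) /\
  (degenerate d eH ->
   exists c1 c2 : R, [/\ 0 < c1, 0 < c2,
     (forall n : nat, (0 < n)%N ->
        (ex_deg d eH n)%:R <= c2 * n%:R ^+ alpha d eH) &
     (exists N : nat, forall n : nat, (N <= n)%N ->
        c1 * n%:R ^+ alpha d eH <= (ex_deg d eH n)%:R)]).
Proof.
split=> [nH n | dH]; first exact: ex_deg_zero.
set k := #|V|; pose C := ((2 * k.+1) ^ alpha d eH)%N.
have C0 : (0 < C)%N by rewrite expn_gt0.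
exists (C%:R)^-1, (2 ^ k * (k * d.+1).+1 ^ k)%N%:R; split.
- by rewrite invr_gt0 ltr0n.
- by rewrite ltr0n muln_gt0 !expn_gt0.
- by move=> n n0; rewrite -natrX -natrM ler_nat ex_deg_upper.
- exists k.+1 => n kn; rewrite ler_pdivrMl ?ltr0n // -natrX -natrM ler_nat.
  exact: ex_deg_lower_pow.
Qed.
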